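(* Let $M\cong\prec a_1,\ldots,a_m\succ$ and $N\cong\prec b_1,\ldots,b_n\succ$ be integral lattices relative to good BONGs with $m\ge n$, and let $j\in[1,\min\{m-1,n\}]^E$. If $R_j=-2e$ and $R_{j+1}=0$, then $d[a_{1,j}b_{1,j}]\ge A_j$.
   Context: $F$ dyadic local field, $\mathcal O_F$, valuation $\operatorname{ord}$, $e=\operatorname{ord}(2)$, $d(c)=\operatorname{ord}(c^{-1}\mathfrak d(c))$ with quadratic defect $\mathfrak d(c)=\bigcap_{x\in F}(c-x^2)\mathcal O_F$. Integral: $Q(M)\subseteq\mathcal O_F$. BONGs: $x_1,\ldots,x_m\in FM$ is a BONG of $M$ if $x_1\in M$ with $Q(x_1)\mathcal O_F=\mathfrak nM$ and $x_2,\ldots,x_m$ is a BONG of the projection of $M$ onto $(Fx_1)^\perp$; good if $\operatorname{ord}Q(x_i)\le\operatorname{ord}Q(x_{i+2})$; $M\cong\prec a_1,\ldots,a_m\succ$ means $Q(x_i)=a_i$. $R_i=\operatorname{ord}(a_i)$, $S_i=\operatorname{ord}(b_i)$. $a_{i,j}=a_i\cdots a_j$, $a_{i,i-1}=1$, similarly $b_{i,j}$. $[h,k]^E$ is the set of even integers in $[h,k]$. For $1\le i\le m-1$, $\alpha_i=\min\{T_0,\ldots,T_{m-1}\}$ with $T_0=(R_{i+1}-R_i)/2+e$, $T_j=R_{i+1}-R_j+d(-a_ja_{j+1})$ ($1\le j\le i$), $T_j=R_{j+1}-R_i+d(-a_ja_{j+1})$ ($i\le j\le m-1$); $\beta_i$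 is defined likewise from $N$. For $c\in F^\times$, $0\le i\le m$, $0\le j\le n$: $d[ca_{1,i}b_{1,j}]=\min\{d(ca_{1,i}b_{1,j}),\alpha_i,\beta_j\}$, where $\alpha_i$ is omitted if $i\in\{0,m\}$ and $\beta_j$ omitted if $j\in\{0,n\}$. For $1\le i\le\min\{m-1,n\}$, $A_i=\min\{(R_{i+1}-S_i)/2+e,\ R_{i+1}-S_i+d[-a_{1,i+1}b_{1,i-1}],\ R_{i+1}+R_{i+2}-S_{i-1}-S_i+d[a_{1,i+2}b_{1,i-2}]\}$, the third term omitted if $i=1$ or $i=m-1$. *)

From HB Require Import structures.
From mathcomp Require Import all_boot all_order all_algebra.
From Stdlib Require Import ClassicalEpsilon.
Set Implicit Arguments.
Unset Strict Implicit.
Unset Printing Implicit Defensive.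
Import Order.TTheory GRing.Theory Num.Theory.
Local Open Scope ring_scope.

(* Extended rationals Q ∪ {+oo} (values of d, alpha, A, ... ; T_0 may be a
   half-integer, d(c) may be +oo). *)
Inductive xr := XFin of rat | XInf.

Definition xle (x y : xr) : bool :=
  match x, y with
  | _, XInf => true
  | XInf, XFin _ => false
  | XFin p, XFin q => p <= q
  end.
Definition xmin (x y : xr) : xr := if xle x y then x else y.
Definition xadd (q : rat) (x : xr) : xr :=
  match x with XFin p => XFin (q + p) | XInf => XInf end.
Definition xsup (S : xr -> Prop) : xr :=
  epsilon (inhabits XInf)
    (fun u => (forall x, S x -> xle x u) /\
              (forall v, (forall x, S x -> xle x v) -> xle u v)).

Record dyadic_local_field (F : fieldType) := DyadicLocalField {
  ord : F -> int;
  ord_mul : forall x y : F, x != 0 -> y != 0 -> ord (x * y) = ord x + ord y;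
  ord_add : forall x y : F, x != 0 -> y != 0 -> x + y != 0 ->
      Num.min (ord x) (ord y) <= ord (x + y);
  ord_surj : forall k : int, exists x : F, x != 0 /\ ord x = k;
  ord_complete : forall u : nat -> F,
      (forall k : int, exists N, forall p q, (N <= p)%N -> (N <= q)%N ->
          u p = u q \/ k <= ord (u p - u q)) ->
      exists l : F, forall k : int, exists N, forall p, (N <= p)%N ->
          u p = l \/ k <= ord (u p - l);
  residue_finite : exists s : seq F, forall x : F, (x == 0) || (0 <= ord x) ->
      exists2 y, y \in s & (x - y == 0) || (0 < ord (x - y));
  two_neq0 : (2%:R : F) != 0;
  ord_two_gt0 : 0 < ord 2%:R
}.

Section Dyadic.
Variables (F : fieldType) (K : dyadic_local_field F).
Local Notation ord := (ord K).

Definition ordr (x : F) : rat := (ord x)%:~R.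
Definition eF : rat := ordr 2%:R.
Definition intg (x : F) : bool := (x == 0) || (0 <= ord x).
Definition ordx (x : F) : xr := if x == 0 then XInf else XFin (ordr x).
(* d(c) = ord(c^{-1} d(c)) where the quadratic defect d(c) is the ideal
   \bigcap_x (c - x^2) O_F, whose order is sup_x ord(c - x^2). *)
Definition qdef (c : F) : xr :=
  xadd (- ordr c) (xsup (fun u => exists x : F, u = ordx (c - x ^+ 2))).

(* Quadratic spaces F^k with symmetric Gram matrix G: B(u,v) = u G v^T,
   Q(v) = B(v,v). *)
Section Lattices.
Variables (k : nat) (G : 'M[F]_k).

Definition Bf (u v : 'rV[F]_k) : F := (u *m G *m v^T) 0 0.
Definition Qf (v : 'rV[F]_k) : F := Bf v v.

Definition in_lat (s : seq 'rV[F]_k) (v : 'rV[F]_k) : Prop :=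
  exists c : 'I_(size s) -> F,
    (forall i, intg (c i)) /\ v = \sum_(i < size s) c i *: s`_i.

Definition proj (x v : 'rV[F]_k) : 'rV[F]_k := v - (Bf v x / Qf x) *: x.

(* xs is a BONG of the lattice generated by s:
   x_1 in M with Q(x_1) O_F = nM, and x_2.. a BONG of the projection of M *)
Fixpoint is_BONG (s : seq 'rV[F]_k) (xs : seq 'rV[F]_k) : Prop :=
  match xs with
  | [::] => forall v, in_lat s v -> v = 0
  | x :: xs' =>
      [/\ in_lat s x, Qf x != 0,
          (forall v, in_lat s v -> intg (Qf v / Qf x))
        & is_BONG (map (proj x) s) xs']
  end.

End Lattices.

(* a_i, 1-based *)
Definition ai (a : seq F) (i : nat) : F := nth 0 a i.-1.
Definition Rr (a : seq F) (i : nat) : rat := ordr (ai a i).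
(* a_{i,j} = a_i ... a_j  (= 1 if j = i - 1) *)
Definition prodr (a : seq F) (i j : nat) : F := \prod_(i <= l < j.+1) ai a l.

Definition good_seq (a : seq F) : Prop :=
  forall i, (1 <= i)%N -> (i + 2 <= size a)%N -> ord (ai a i) <= ord (ai a i.+2).

(* M = lattice generated by s in (F^k, G), M ≅ ≺a_1..a_m≻ relative to a good BONG *)
Definition good_BONG_lattice (k : nat) (G : 'M[F]_k) (s : seq 'rV[F]_k)
    (a : seq F) : Prop :=
  exists xs, is_BONG G s xs /\ map (Qf G) xs = a /\ good_seq a.

Definition integral_lattice (k : nat) (G : 'M[F]_k) (s : seq 'rV[F]_k) : Prop :=
  forall v, in_lat s v -> intg (Qf G v).

Definition Tterm (a : seq F) (i jj : nat) : xr :=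
  if jj == 0%N then XFin ((Rr a i.+1 - Rr a i) / 2%:R + eF)
  else if (jj <= i)%N then
    xadd (Rr a i.+1 - Rr a jj) (qdef (- (ai a jj * ai a jj.+1)))
  else xadd (Rr a jj.+1 - Rr a i) (qdef (- (ai a jj * ai a jj.+1))).

Definition alpha (a : seq F) (i : nat) : xr :=
  foldr xmin XInf [seq Tterm a i jj | jj <- iota 0 (size a)].

Definition dbr (a b : seq F) (c : F) (i j : nat) : xr :=
  xmin (qdef (c * prodr a 1 i * prodr b 1 j))
    (xmin (if (0 < i < size a)%N then alpha a i else XInf)
          (if (0 < j < size b)%N then alpha b j else XInf)).

Definition Acoef (a b : seq F) (i : nat) : xr :=
  xmin (XFin ((Rr a i.+1 - Rr b i) / 2%:R + eF))
   (xmin (xadd (Rr a i.+1 - Rr b i) (dbr a b (-1) i.+1 i.-1))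
     (if (i == 1%N) || (i == (size a).-1) then XInf
      else xadd (Rr a i.+1 + Rr a i.+2 - Rr b i.-1 - Rr b i)
                (dbr a b 1 i.+2 i.-2))).

End Dyadic.

From Pilot Require Import Defs.
From mathcomp Require Import all_boot all_order all_algebra.
From mathcomp Require Import ring lra zify.
From Stdlib Require Import ClassicalEpsilon.
Import Order.TTheory GRing.Theory Num.Theory.
Local Open Scope ring_scope.
Set Implicit Arguments.
Unset Strict Implicit.
Unset Printing Implicit Defensive.

(* Since R_1 >= 0, R_j = -2e, R_{j+1} = 0 and the BONG is good, the odd R_i
   (i <= j+1) all vanish and the even R_i (i <= j) are at most -2e; the BONG
   condition R_{i+1} >= R_i - 2e is then an equality for odd i < j, which
   forces d(-a_i a_{i+1}) >= 2e.  On the side of N, the odd S_i are >= 0 and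
   S_j >= S_1 - 2e >= -2e.  Hence A_j <= e - S_j/2 <= 2e and
   A_j <= beta_{j-1} - S_j.  Now a_{1,j} b_{1,j} is the product of the
   (-a_i a_{i+1})(-b_i b_{i+1}) over odd i < j, and d(xy) >= min(d(x), d(y))
   bounds d(a_{1,j} b_{1,j}); finally alpha_j and beta_j are compared term by
   term with 2e, alpha_{j+1} - S_j and beta_{j-1} - S_j. *)

Lemma xle_refl x : xle x x.
Proof. by case: x => //= p. Qed.

Lemma xle_trans x y z : xle x y -> xle y z -> xle x z.
Proof. case: x; case: y; case: z => //= p q r; exact: le_trans. Qed.

Lemma xle_inf x : xle x XInf.
Proof. by case: x. Qed.

Lemma xle_total x y : xle x y || xle y x.
Proof. case: x; case: y => //= p q; exact: le_total. Qed.

Lemma xle_min z x y : xle z (xmin x y) = xle z x && xle z y.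
Proof.
rewrite /xmin; case: ifP => hxy; apply/idP/andP => [hz|[hzx hzy]] //.
- by split=> //; exact: xle_trans hz hxy.
- have /orP[hxy'|hyx] := xle_total x y; first by rewrite hxy' in hxy.
  by split=> //; exact: xle_trans hz hyx.
Qed.

Lemma xge_min x y z : xle (xmin x y) z = xle x z || xle y z.
Proof.
rewrite /xmin; case: ifP => hxy; apply/idP/orP => [h|[hxz|hyz]] //; try by [left | right].
- exact: xle_trans hxy hyz.
- have /orP[hxy'|hyx] := xle_total x y; first by rewrite hxy' in hxy.
  exact: xle_trans hyx hxz.
Qed.

Lemma xadd_le q r x y : q <= r -> xle x y -> xle (xadd q x) (xadd r y).
Proof. case: x; case: y => //= p p' hqr hp; lra. Qed.

Lemma xle_fin_xadd p q x : xle (XFin p) (xadd q x) = xle (XFin (p - q)) x.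
Proof. by case: x => //= p'; rewrite lerBlDl. Qed.

Lemma xadd0 x : xadd 0 x = x.
Proof. by case: x => //= p; rewrite add0r. Qed.

Lemma xaddA q r x : xadd q (xadd r x) = xadd (q + r) x.
Proof. by case: x => //= p; rewrite addrA. Qed.

Lemma xle_fin_le x y : (forall q, xle (XFin q) x -> xle (XFin q) y) -> xle x y.
Proof.
case: x => [p|] h; first by apply: h; exact: lexx.
case: y h => // p h; have := h (p + 1) isT => /=; lra.
Qed.

Lemma foldr_xmin_le (f : nat -> xr) (s : seq nat) t :
  t \in s -> xle (foldr xmin XInf (map f s)) (f t).
Proof.
elim: s => //= x s IH; rewrite in_cons xge_min => /orP [/eqP ->|/IH ->].
  by rewrite xle_refl.
by rewrite orbT.
Qed.

Lemma le_foldr_xmin (f : nat -> xr) (s : seq nat) z :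
  (forall t, t \in s -> xle z (f t)) -> xle z (foldr xmin XInf (map f s)).
Proof.
elim: s => [|x s IH] h /=; first exact: xle_inf.
rewrite xle_min h ?mem_head //=; apply: IH => t ht.
by apply: h; rewrite in_cons ht orbT.
Qed.

Lemma bounded_int_max (T : Type) (f : T -> int) (M : int) (t0 : T) :
  (forall t, f t <= M) -> exists t1, forall t, f t <= f t1.
Proof.
move=> hM.
suff H n : (exists t, M - n%:Z <= f t) -> exists t1, forall t, f t <= f t1.
  by apply: (H (absz (M - f t0))); exists t0; have := hM t0; lia.
elim: n => [|n IH] [t ht].
  by exists t => t'; have := hM t'; have := hM t; lia.
case: (classic (exists t, M - n%:Z <= f t)) => [|hn]; first exact: IH.
exists t => t'; case: (lerP (M - n%:Z) (f t')) => h; last lia.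
by case: hn; exists t'.
Qed.

Section Valuation.
Variables (F : fieldType) (K : dyadic_local_field F).
Local Notation ord := (ord K).
Local Notation ordr := (ordr K).
Local Notation ordx := (ordx K).
Local Notation qdef := (qdef K).

Lemma ord1 : ord 1 = 0.
Proof.
have := ord_mul K (oner_neq0 F) (oner_neq0 F); rewrite mulr1 => h.
by move: (ord 1) h => n; lia.
Qed.

Lemma ordN z : z != 0 -> ord (- z) = ord z.
Proof.
have hN1 : (-1 : F) != 0 by rewrite oppr_eq0 oner_neq0.
have ordN1 : ord (-1) = 0.
  have := ord_mul K hN1 hN1; rewrite mulrNN mulr1 ord1 => h.
  by move: (ord (-1)) h => n; lia.
by move=> hz; rewrite -mulN1r ord_mul // ordN1 add0r.
Qed.

Lemma ordrM x y : x != 0 -> y != 0 -> ordr (x * y) = ordr x + ordr y.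
Proof. by move=> hx hy; rewrite /Defs.ordr ord_mul // intrD. Qed.

Lemma ordrN z : z != 0 -> ordr (- z) = ordr z.
Proof. by move=> hz; rewrite /Defs.ordr ordN. Qed.

Definition ord_ge (z : F) (r : rat) : bool := (z == 0) || (r <= ordr z).

Lemma ord_ge0 r : ord_ge 0 r.
Proof. by rewrite /ord_ge eqxx. Qed.

Lemma ord_geW z r r' : r' <= r -> ord_ge z r -> ord_ge z r'.
Proof. by rewrite /ord_ge => h /orP [->|/(le_trans h) ->]; rewrite ?orbT. Qed.

Lemma ord_ge_self z : ord_ge z (ordr z).
Proof. by rewrite /ord_ge lexx orbT. Qed.

Lemma ord_ge_neq0 z r : z != 0 -> ord_ge z r -> r <= ordr z.
Proof. by rewrite /ord_ge => /negbTE ->. Qed.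

Lemma intgE x : intg K x = ord_ge x 0.
Proof. by rewrite /intg /ord_ge /Defs.ordr ler0z. Qed.

Lemma ordx_ge z r : xle (XFin r) (ordx z) = ord_ge z r.
Proof. by rewrite /Defs.ordx /ord_ge; case: (z == 0). Qed.

Lemma ord_geD z w r : ord_ge z r -> ord_ge w r -> ord_ge (z + w) r.
Proof.
rewrite /ord_ge; have [->|hz] := eqVneq z 0; first by rewrite add0r.
have [->|hw] := eqVneq w 0; first by move=> h _; rewrite addr0 (negbTE hz).
have [//|hzw /= hrz hrw] := eqVneq (z + w) 0.
have := ord_add K hz hw hzw; move: hrz hrw; rewrite /Defs.ordr => hrz hrw hmin.
have [h|h] : ord z <= ord (z + w) \/ ord w <= ord (z + w) by lia.
- by apply: le_trans hrz _; rewrite ler_int.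
- by apply: le_trans hrw _; rewrite ler_int.
Qed.

Lemma ord_geN z r : ord_ge z r -> ord_ge (- z) r.
Proof.
rewrite /ord_ge; have [->|hz] := eqVneq z 0; first by rewrite oppr0 eqxx.
by rewrite oppr_eq0 (negbTE hz) /= ordrN.
Qed.

Lemma ord_geB z w r : ord_ge z r -> ord_ge w r -> ord_ge (z - w) r.
Proof. by move=> hz hw; apply: ord_geD hz (ord_geN hw). Qed.

Lemma ord_geM z w r s : ord_ge z r -> ord_ge w s -> ord_ge (z * w) (r + s).
Proof.
rewrite /ord_ge; have [->|hz] := eqVneq z 0; first by rewrite mul0r eqxx.
have [->|hw] := eqVneq w 0; first by rewrite mulr0 eqxx.
by rewrite mulf_eq0 (negbTE hz) (negbTE hw) /= ordrM //; exact: lerD.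
Qed.

Lemma ord_ge1 : ord_ge 1 0.
Proof. by rewrite /ord_ge /Defs.ordr ord1 lexx orbT. Qed.

Lemma ord_ge2 : ord_ge 2%:R 0.
Proof. by rewrite /ord_ge /Defs.ordr ler0z ltW ?ord_two_gt0 ?orbT. Qed.

Definition is_xlub (S : xr -> Prop) (u : xr) : Prop :=
  (forall x, S x -> xle x u) /\ (forall v, (forall x, S x -> xle x v) -> xle u v).

Definition sq_dist_ords (c : F) (u : xr) : Prop := exists x, u = ordx (c - x ^+ 2).

(* The ords of [c - x^2] are integers, so a finite supremum is attained. *)
Lemma sq_dist_ords_lub c : exists u, is_xlub (sq_dist_ords c) u.
Proof.
have [[x0 hx0]|hno] := classic (exists x, c - x ^+ 2 = 0).
  exists XInf; split=> [x _|v hv]; first exact: xle_inf.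
  by have := hv _ (ex_intro _ x0 erefl); rewrite /Defs.ordx hx0 eqxx.
have hfin x : ordx (c - x ^+ 2) = XFin (ordr (c - x ^+ 2)).
  by rewrite /Defs.ordx; case: eqP => // h; case: hno; exists x.
have [[q hq]|hub] := classic (exists q, forall x, ordr (c - x ^+ 2) <= q).
  have [x1 hx1] := @bounded_int_max F (fun x => ord (c - x ^+ 2)) (Num.ceil q) 0
    (fun x => ltac:(rewrite -(ler_int rat); exact: le_trans (hq x) (ceil_ge q))).
  exists (ordx (c - x1 ^+ 2)); split=> [u [x ->]|v hv]; last by apply: hv; exists x1.
  by rewrite !hfin /= /Defs.ordr ler_int.
exists XInf; split=> [x _|[q|//] hv]; first exact: xle_inf.
case: hub; exists q => x.
by have := hv _ (ex_intro _ x erefl); rewrite hfin.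
Qed.

Lemma qdef_lub c : is_xlub (sq_dist_ords c) (xsup (sq_dist_ords c)).
Proof. exact: epsilon_spec (inhabits XInf) _ (sq_dist_ords_lub c). Qed.

Lemma qdef_geP c q :
  xle (XFin q) (qdef c) <-> exists x, ord_ge (c - x ^+ 2) (q + ordr c).
Proof.
have [ub lub] := qdef_lub c.
rewrite /Defs.qdef xle_fin_xadd opprK; split=> [hq|[x hx]]; last first.
  by apply: xle_trans (ub _ (ex_intro _ x erefl)); rewrite ordx_ge.
apply: NNPP => hno.
pose p := ((Num.ceil (q + ordr c) - 1)%:~R : rat).
suff : xle (xsup (sq_dist_ords c)) (XFin p).
  by move/(xle_trans hq) => /=; have := ceilB1_lt (q + ordr c); lra.
apply: lub => _ [x ->]; rewrite /Defs.ordx.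
case: eqP => [hx|/eqP hx /=]; first by case: hno; exists x; rewrite hx ord_ge0.
rewrite /p /Defs.ordr ler_int -ltzD1 subrK ceil_gt_int -/(Defs.ordr K _).
by rewrite ltNge; apply/negP => h; apply: hno; exists x; rewrite /ord_ge h orbT.
Qed.

Lemma qdef_ge0 c : c != 0 -> xle (XFin 0) (qdef c).
Proof. by move=> hc; apply/qdef_geP; exists 0; rewrite expr0n subr0 add0r ord_ge_self. Qed.

Lemma qdef1 : qdef 1 = XInf.
Proof.
suff : xle XInf (qdef 1) by case: (qdef 1).
have [ub _] := qdef_lub 1.
have := ub _ (ex_intro _ 1 erefl); rewrite expr1n subrr /Defs.ordx eqxx /Defs.qdef.
by case: (xsup _).
Qed.

Lemma qdef_mul x y : x != 0 -> y != 0 ->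
  xle (xmin (qdef x) (qdef y)) (qdef (x * y)).
Proof.
move=> hx hy; apply: xle_fin_le => q; rewrite xle_min => /andP[hqx hqy].
have [hq0|q_gt0] := lerP q 0.
  by apply: xle_trans (qdef_ge0 (mulf_neq0 hx hy)); rewrite /= hq0.
have [s hs] := (qdef_geP x q).1 hqx; have [t ht] := (qdef_geP y q).1 hqy.
apply/qdef_geP; exists (s * t).
have hs2 : ord_ge (s ^+ 2) (ordr x).
  have -> : s ^+ 2 = x - (x - s ^+ 2) by ring.
  by apply: ord_geB (ord_ge_self x) (ord_geW _ hs); lra.
have -> : x * y - (s * t) ^+ 2 = (x - s ^+ 2) * y + s ^+ 2 * (y - t ^+ 2) by ring.
rewrite ordrM //; apply: ord_geD.
  by apply: ord_geW (ord_geM hs (ord_ge_self y)); lra.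
by apply: ord_geW (ord_geM hs2 ht); lra.
Qed.

End Valuation.

Section BilinearForm.
Variables (F : fieldType) (k : nat) (G : 'M[F]_k).
Local Notation Bf := (Bf G).
Local Notation Qf := (Qf G).
Local Notation proj := (proj G).

Lemma BfDl u w v : Bf (u + w) v = Bf u v + Bf w v.
Proof. by rewrite /Defs.Bf !mulmxDl mxE. Qed.

Lemma BfZl c u v : Bf (c *: u) v = c * Bf u v.
Proof. by rewrite /Defs.Bf -!scalemxAl mxE. Qed.

Lemma projD x u w : proj x (u + w) = proj x u + proj x w.
Proof. by rewrite /Defs.proj BfDl mulrDl scalerDl opprD addrACA. Qed.

Lemma projZ x c u : proj x (c *: u) = c *: proj x u.
Proof. by rewrite /Defs.proj BfZl scalerBr scalerA mulrA. Qed.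

Lemma proj_sum x n (c : 'I_n -> F) (s : seq 'rV[F]_k) :
  proj x (\sum_(i < n) c i *: s`_i) = \sum_(i < n) c i *: proj x s`_i.
Proof.
have proj0 : proj x 0 = 0 by rewrite -(scale0r 0) projZ !scale0r.
rewrite (big_morph (proj x) (projD x) proj0).
by apply: eq_bigr => i _; exact: projZ.
Qed.

Hypothesis Gsym : G^T = G.

Lemma BfC u v : Bf u v = Bf v u.
Proof.
have h (A : 'M[F]_1) : A 0 0 = A^T 0 0 by rewrite mxE.
by rewrite /Defs.Bf [RHS]h !trmx_mul trmxK Gsym mulmxA.
Qed.

Lemma BfDr u w v : Bf v (u + w) = Bf v u + Bf v w.
Proof. by rewrite BfC BfDl !(BfC v). Qed.

Lemma BfZr c u v : Bf v (c *: u) = c * Bf v u.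
Proof. by rewrite BfC BfZl (BfC v). Qed.

Lemma QfD v x : Qf (v + x) = Qf v + 2%:R * Bf v x + Qf x.
Proof. by rewrite /Defs.Qf BfDl !BfDr (BfC x v); ring. Qed.

Lemma Qf_proj x v : Qf x != 0 -> Qf (proj x v) = Qf v - Bf v x ^+ 2 / Qf x.
Proof.
move=> hx; rewrite /Defs.proj /Defs.Qf -!scaleN1r.
rewrite BfDl !BfDr !BfZl !BfZr (BfC x v).
by rewrite /Defs.Qf in hx; field.
Qed.

End BilinearForm.

Section Lattice.
Variables (F : fieldType) (K : dyadic_local_field F) (k : nat) (G : 'M[F]_k).
Local Notation in_lat := (in_lat K).

Lemma in_latD (s : seq 'rV[F]_k) v w : in_lat s v -> in_lat s w -> in_lat s (v + w).
Proof.
move=> [c [hc ->]] [d [hd ->]]; exists (fun i => c i + d i); split.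
  by move=> i; rewrite intgE ord_geD // -intgE.
by rewrite -big_split /=; apply: eq_bigr => i _; rewrite scalerDl.
Qed.

Lemma in_lat_proj x s y : in_lat (map (proj G x) s) y ->
  exists2 v, in_lat s v & y = proj G x v.
Proof.
move=> [c [hc ->]]; have e := size_map (proj G x) s.
exists (\sum_(i < size (map (proj G x) s)) c i *: s`_i).
  exists (fun i => c (cast_ord (esym e) i)); split=> //.
  by case: _ / e (c) => c'; apply: eq_bigr => i _; rewrite cast_ord_id.
rewrite proj_sum; apply: eq_bigr => i _; rewrite (nth_map 0) //.
by rewrite -e.
Qed.

End Lattice.

Section BongNorms.
Variables (F : fieldType) (K : dyadic_local_field F).
Local Notation ordr := (ordr K).
Local Notation eF := (eF K).
Local Notation qdef := (qdef K).
Local Notation Rr := (Rr K).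

Definition bong_adjacent (p q : F) : Prop :=
  ordr p - 2%:R * eF <= ordr q /\
  (ordr q = ordr p - 2%:R * eF -> xle (XFin (2%:R * eF)) (qdef (- (p * q)))).

Lemma bong_adjacent_proj k (G : 'M[F]_k) (s : seq 'rV[F]_k) x y : G^T = G ->
  in_lat K s x -> Qf G x != 0 -> (forall v, in_lat K s v -> intg K (Qf G v / Qf G x)) ->
  in_lat K (map (proj G x) s) y -> Qf G y != 0 -> bong_adjacent (Qf G x) (Qf G y).
Proof.
move=> Gsym hx hQx hnorm hy hQy; have [v hv hyv] := in_lat_proj hy; subst y.
set u := Qf G v / Qf G x; set w := 2%:R * Bf G v x / Qf G x.
have hu : ord_ge K u 0 by rewrite -intgE; exact: hnorm.
have hw : ord_ge K w 0.
  have -> : w = Qf G (v + x) / Qf G x - u - 1 by rewrite /w /u QfD //; field.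
  by rewrite !ord_geB ?ord_ge1 // -intgE; apply: hnorm; exact: in_latD.
(* 4 Q(y) = Q(x) (4u - w^2), and 4u - w^2 is integral *)
set z := 2%:R * 2%:R * u - w ^+ 2.
have key : Qf G (proj G x v) * (2%:R * 2%:R) = Qf G x * z.
  by rewrite /z /u /w Qf_proj //; field.
have hz : ord_ge K z 0.
  apply: ord_geB; last by rewrite expr2 -(addr0 0) ord_geM.
  by rewrite -(addr0 0) ord_geM // -(addr0 0) ord_geM ?ord_ge2.
have e2 := two_neq0 K.
have hz0 : z != 0.
  apply/eqP => hz0; move/eqP: key; rewrite hz0 mulr0.
  by rewrite !mulf_eq0 (negbTE hQy) (negbTE e2).
have hord : ordr (Qf G (proj G x v)) + (eF + eF) = ordr (Qf G x) + ordr z.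
  by rewrite -ordrM // -key !ordrM ?mulf_neq0.
split=> [|heq]; first by have := ord_ge_neq0 hz0 hz; lra.
apply/qdef_geP; exists (Bf G v x).
have -> : - (Qf G x * Qf G (proj G x v)) - Bf G v x ^+ 2 = - (Qf G x * Qf G v).
  by rewrite Qf_proj //; field.
have hQv : ord_ge K (Qf G v) (ordr (Qf G x)).
  have -> : Qf G v = u * Qf G x by rewrite /u divfK.
  by have := ord_geM hu (ord_ge_self K (Qf G x)); rewrite add0r.
rewrite ordrN ?oppr_eq0 ?mulf_neq0 // ordrM //; apply: ord_geN.
by apply: ord_geW (ord_geM (ord_ge_self K (Qf G x)) hQv); lra.
Qed.

Lemma is_BONG_norms k (G : 'M[F]_k) (s xs : seq 'rV[F]_k) : G^T = G -> is_BONG K G s xs ->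
  (forall i, (i < size xs)%N -> Qf G (nth 0 xs i) != 0) /\
  (forall i, (i.+1 < size xs)%N ->
     bong_adjacent (Qf G (nth 0 xs i)) (Qf G (nth 0 xs i.+1))).
Proof.
move=> Gsym; elim: xs s => [|x xs IH] s //= [hx hQx hnorm hB].
have [IHneq0 IHadj] := IH _ hB; split=> [[|i]|[|i]] //= hi; try exact: IHneq0; try exact: IHadj.
move: hB hi; case: xs {IH IHneq0 IHadj} => [|y xs'] //= [hy hQy _ _] _.
exact: bong_adjacent_proj hx hQx hnorm hy hQy.
Qed.

Record bong_norms (a : seq F) : Prop := BongNorms {
  bong_norms_neq0 : forall i, (0 < i <= size a)%N -> ai a i != 0;
  bong_norms_adjacent : forall i, (0 < i < size a)%N -> bong_adjacent (ai a i) (ai a i.+1);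
  bong_norms_good : good_seq K a;
  bong_norms_R1 : (0 < size a)%N -> 0 <= Rr a 1
}.

Lemma good_BONG_lattice_norms k (G : 'M[F]_k) (s : seq 'rV[F]_k) (a : seq F) :
  G^T = G -> good_BONG_lattice K G s a -> integral_lattice K G s -> bong_norms a.
Proof.
move=> Gsym [xs [hB [<- hgood]]] hint; have [hneq0 hadj] := is_BONG_norms Gsym hB.
split=> // [[|i]|[|i]|]; rewrite ?size_map //= => hi.
- by rewrite /ai (nth_map 0) //; exact: hneq0.
- by rewrite /ai /= !(nth_map 0) ?(ltnW hi) //; exact: hadj.
case: xs hB {hneq0 hadj hgood} hi => [|x xs] //= [hx hQx _ _] _.
by have := hint _ hx; rewrite intgE /Rr /ai /=; exact: ord_ge_neq0.
Qed.

Lemma good_seq_le (a : seq F) i i' : good_seq K a -> (0 < i <= i')%N ->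
  (i' <= size a)%N -> ~~ odd (i' - i) -> Rr a i <= Rr a i'.
Proof.
move=> hgood /andP[hi hii'] hi' heven.
have -> : i' = (i + (i' - i)./2.*2)%N by rewrite even_halfK // subnKC.
have : (i + (i' - i)./2.*2 <= size a)%N by rewrite even_halfK // subnKC.
elim: (i' - i)./2 => [|t IH] ht; first by rewrite addn0.
apply: le_trans (IH _) _; first by move: ht; rewrite doubleS; lia.
rewrite doubleS !addnS /Rr /Defs.ordr ler_int; apply: hgood; lia.
Qed.

End BongNorms.

Section Alpha.
Variables (F : fieldType) (K : dyadic_local_field F).
Local Notation Rr := (Rr K).
Local Notation qdef := (qdef K).
Local Notation alpha := (alpha K).
Local Notation Tterm := (Tterm K).

Definition Tshift (a : seq F) (i jj : nat) : rat :=
  if (jj <= i)%N then Rr a i.+1 - Rr a jj else Rr a jj.+1 - Rr a i.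

Lemma TtermE a i jj : (0 < jj)%N ->
  Tterm a i jj = xadd (Tshift a i jj) (qdef (- (ai a jj * ai a jj.+1))).
Proof. by rewrite /Tterm /Tshift lt0n => /negbTE ->; case: ifP. Qed.

Lemma alpha_le_Tterm a i jj : (jj < size a)%N -> xle (alpha a i) (Tterm a i jj).
Proof. by move=> hjj; apply: foldr_xmin_le; rewrite mem_iota. Qed.

Lemma le_alpha a i z :
  (forall jj, (jj < size a)%N -> xle z (Tterm a i jj)) -> xle z (alpha a i).
Proof. by move=> h; apply: le_foldr_xmin => jj; rewrite mem_iota => /h. Qed.

Lemma xadd_Tterm_le a i i' jj c : (0 < jj)%N -> c + Tshift a i' jj <= Tshift a i jj ->
  xle (xadd c (Tterm a i' jj)) (Tterm a i jj).
Proof. by move=> hjj h; rewrite !TtermE // xaddA; apply: xadd_le (xle_refl _). Qed.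

Lemma xadd_qdef_le a i jj c : (0 < jj)%N -> c + Tshift a i jj <= 0 ->
  xle (xadd c (Tterm a i jj)) (qdef (- (ai a jj * ai a jj.+1))).
Proof.
by move=> hjj h; rewrite TtermE // xaddA -[X in xle _ X]xadd0; apply: xadd_le (xle_refl _).
Qed.

(* Each step multiplies the product by [(- a_i a_{i+1}) (- b_i b_{i+1})]. *)
Lemma qdef_prodr_pairs (a b : seq F) t z :
  (forall i, (0 < i <= t.*2)%N -> (ai a i != 0) && (ai b i != 0)) ->
  (forall i, odd i -> (i < t.*2)%N ->
     xle z (qdef (- (ai a i * ai a i.+1))) && xle z (qdef (- (ai b i * ai b i.+1)))) ->
  xle z (qdef (prodr a 1 t.*2 * prodr b 1 t.*2)).
Proof.
have prodrS c n : prodr c 1 n.+1 = prodr c 1 n * ai c n.+1 by rewrite /prodr big_nat_recr.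
elim: t => [|t IH] hneq0 hpair.
  by rewrite /prodr !big_geq // mulr1 qdef1 xle_inf.
have prodr_neq0 c : (forall i, (0 < i <= t.*2.+2)%N -> ai c i != 0) -> prodr c 1 t.*2 != 0.
  by move=> hc; rewrite /prodr prodf_seq_neq0; apply/allP => i; rewrite mem_index_iota => hi;
     apply: hc; lia.
have /andP[ha1 hb1] := hneq0 t.*2.+1 (ltac:(lia)).
have /andP[ha2 hb2] := hneq0 t.*2.+2 (ltac:(lia)).
have hab : prodr a 1 t.*2 * prodr b 1 t.*2 != 0.
  by rewrite mulf_neq0 // prodr_neq0 // => i /hneq0 /andP[].
have hA : - (ai a t.*2.+1 * ai a t.*2.+2) != 0 by rewrite oppr_eq0 mulf_neq0.
have hB : - (ai b t.*2.+1 * ai b t.*2.+2) != 0 by rewrite oppr_eq0 mulf_neq0.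
rewrite doubleS !prodrS.
have -> : prodr a 1 t.*2 * ai a t.*2.+1 * ai a t.*2.+2 *
          (prodr b 1 t.*2 * ai b t.*2.+1 * ai b t.*2.+2) =
          prodr a 1 t.*2 * prodr b 1 t.*2 *
          ((- (ai a t.*2.+1 * ai a t.*2.+2)) * (- (ai b t.*2.+1 * ai b t.*2.+2))) by ring.
apply: xle_trans (qdef_mul K hab (mulf_neq0 hA hB)); rewrite xle_min; apply/andP; split.
  apply: IH => [i hi|i hodd hi]; first by apply: hneq0; lia.
  by apply: hpair => //; lia.
apply: xle_trans (qdef_mul K hA hB); rewrite xle_min.
by apply: hpair; [rewrite /= odd_double | lia].
Qed.

End Alpha.

Section LowerBound.
Variables (F : fieldType) (K : dyadic_local_field F) (a b : seq F) (j : nat).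
Local Notation Rr := (Rr K).
Local Notation eF := (eF K).
Local Notation qdef := (qdef K).
Local Notation alpha := (alpha K).
Local Notation A := (Acoef K a b j).

Hypotheses (ha : bong_norms K a) (hb : bong_norms K b).
Hypotheses (hj2 : (2 <= j)%N) (hja : (j < size a)%N) (hjb : (j <= size b)%N).
Hypotheses (hj_even : ~~ odd j) (hRj : Rr a j = - (2%:R * eF)) (hRj1 : Rr a j.+1 = 0).

(* [R_1 >= 0] and goodness squeeze the odd [R_i] up to [R_{j+1} = 0]. *)
Lemma Ra_odd i : odd i -> (i <= j.+1)%N -> Rr a i = 0.
Proof.
move=> hodd hi; have hi0 : (0 < i)%N by case: i hodd {hi}.
have hgood := bong_norms_good ha.
apply/eqP; rewrite eq_le; apply/andP; split.
  by rewrite -hRj1; apply: good_seq_le hgood _ _ _; lia.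
by apply: le_trans (bong_norms_R1 ha _) (good_seq_le hgood _ _ _); lia.
Qed.

Lemma Ra_even i : ~~ odd i -> (0 < i <= j)%N -> Rr a i <= - (2%:R * eF).
Proof.
by move=> heven hi; rewrite -hRj; apply: good_seq_le (bong_norms_good ha) _ _ _; lia.
Qed.

Lemma qdef_a_pair i : odd i -> (i < j)%N ->
  xle (XFin (2%:R * eF)) (qdef (- (ai a i * ai a i.+1))).
Proof.
move=> hodd hi; have hi0 : (0 < i)%N by case: i hodd {hi}.
have [hge heq] := bong_norms_adjacent ha (ltac:(lia) : (0 < i < size a)%N).
apply: heq; have := Ra_odd hodd (ltac:(lia)).
have := Ra_even (ltac:(by rewrite /= hodd) : ~~ odd i.+1) (ltac:(lia)).
by rewrite /Rr in hge *; lra.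
Qed.

Lemma Rb_odd i : odd i -> (i <= size b)%N -> 0 <= Rr b i.
Proof.
move=> hodd hi; have hi0 : (0 < i)%N by case: i hodd {hi}.
by apply: le_trans (bong_norms_R1 hb _) (good_seq_le (bong_norms_good hb) _ _ _); lia.
Qed.

Lemma Rb_j : - (2%:R * eF) <= Rr b j.
Proof.
have [hge _] := bong_norms_adjacent hb (ltac:(lia) : (0 < 1 < size b)%N).
have := Rb_odd (isT : odd 1) (ltac:(lia)).
have : Rr b 2 <= Rr b j.
  by apply: good_seq_le (bong_norms_good hb) _ _ _; lia.
by rewrite /Rr in hge *; lra.
Qed.

Lemma Acoef_le_half : xle A (XFin (- Rr b j / 2%:R + eF)).
Proof. by rewrite /Acoef hRj1 sub0r xge_min xle_refl. Qed.

Lemma Acoef_le_2e : xle A (XFin (2%:R * eF)).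
Proof. by apply: xle_trans Acoef_le_half _ => /=; have := Rb_j; lra. Qed.

Lemma Acoef_le_beta : xle A (xadd (- Rr b j) (alpha b j.-1)).
Proof.
rewrite /Acoef hRj1 sub0r !xge_min; apply/orP; right; apply/orP; left.
apply: xadd_le (lexx _) _; rewrite /dbr (_ : (0 < j.-1 < size b)%N); last by lia.
by rewrite !xge_min xle_refl !orbT.
Qed.

Lemma Acoef_le_alpha : (j.+1 < size a)%N -> xle A (xadd (- Rr b j) (alpha a j.+1)).
Proof.
move=> hj1; rewrite /Acoef hRj1 sub0r !xge_min; apply/orP; right; apply/orP; left.
apply: xadd_le (lexx _) _; rewrite /dbr (_ : (0 < j.+1 < size a)%N); last by lia.
by rewrite !xge_min xle_refl orbT.
Qed.

Lemma Acoef_le_qdef_prod : xle A (qdef (prodr a 1 j * prodr b 1 j)).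
Proof.
have := @qdef_prodr_pairs F K a b j./2 A; rewrite even_halfK //; apply=> [i hi|i hodd hi].
  by rewrite (bong_norms_neq0 ha) ?(bong_norms_neq0 hb) //; lia.
apply/andP; split.
  exact: xle_trans Acoef_le_2e (qdef_a_pair hodd hi).
apply: xle_trans Acoef_le_beta _.
have hib : (i < size b)%N by lia.
apply: xle_trans (xadd_le (lexx _) (alpha_le_Tterm K _ hib)) _.
apply: xadd_qdef_le; first by case: i hodd {hi hib}.
have hij : (i <= j.-1)%N by lia.
rewrite /Tshift hij prednK; last lia.
by have := Rb_odd hodd (ltnW hib); lra.
Qed.

Lemma Acoef_le_alpha_j : xle A (alpha a j).
Proof.
apply: le_alpha => -[_|jj hjj].
  by apply: xle_trans Acoef_le_2e _; rewrite /Tterm /= hRj1 hRj; lra.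
have [hle|hgt] := leqP jj.+1 j.
  apply: xle_trans Acoef_le_2e _; rewrite TtermE // /Tshift hle hRj1 sub0r xle_fin_xadd opprK.
  have [hodd|heven] := boolP (odd jj.+1).
    have -> : Rr a jj.+1 = 0 by apply: Ra_odd => //; lia.
    by rewrite addr0; apply: qdef_a_pair => //; lia.
  apply: xle_trans (qdef_ge0 _ _) => /=.
    by have := Ra_even heven (ltac:(lia)); lra.
  by rewrite oppr_eq0 mulf_neq0 // (bong_norms_neq0 ha) //; lia.
apply: xle_trans (Acoef_le_alpha (ltac:(lia))) _.
apply: xle_trans (xadd_le (lexx _) (alpha_le_Tterm K _ hjj)) _.
apply: xadd_Tterm_le => //.
rewrite /Tshift [(jj.+1 <= j)%N]leqNgt hgt /=.
case: leqP => hjj1; last have -> : jj = j by lia.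
all: by rewrite hRj1 hRj; have := Rb_j; lra.
Qed.

Lemma Acoef_le_beta_j : (j < size b)%N -> xle A (alpha b j).
Proof.
move=> hjb1; have hSj1 : 0 <= Rr b j.+1 by apply: Rb_odd; lia.
have hSj_1 : 0 <= Rr b j.-1.
  by apply: Rb_odd; lia.
apply: le_alpha => -[_|ll hll].
  by apply: xle_trans Acoef_le_half _; rewrite /Tterm /=; lra.
apply: xle_trans Acoef_le_beta _.
apply: xle_trans (xadd_le (lexx _) (alpha_le_Tterm K _ hll)) _.
apply: xadd_Tterm_le => //.
rewrite /Tshift prednK; last lia.
have [h1|h1] := ltnP ll j.-1; first by rewrite (_ : (ll < j)%N); [lra | lia].
have [h2|h2] := ltnP ll j; last lra.
have -> : ll.+1 = j by lia.
lra.
Qed.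

End LowerBound.

Theorem lemma2p9 (F : fieldType) (K : dyadic_local_field F)
    (k1 k2 : nat) (G1 : 'M[F]_k1) (G2 : 'M[F]_k2)
    (sM : seq 'rV[F]_k1) (sN : seq 'rV[F]_k2) (a b : seq F) (j : nat) :
  G1^T = G1 -> G2^T = G2 ->
  good_BONG_lattice K G1 sM a -> good_BONG_lattice K G2 sN b ->
  integral_lattice K G1 sM -> integral_lattice K G2 sN ->
  (size b <= size a)%N ->
  (1 <= j <= minn (size a).-1 (size b))%N -> ~~ odd j ->
  Rr K a j = - (2%:R * eF K) -> Rr K a j.+1 = 0 ->
  xle (Acoef K a b j) (dbr K a b 1 j j).
Proof.
move=> G1sym G2sym hM hN hMint hNint _ hj hj_even hRj hRj1.
have ha := good_BONG_lattice_norms G1sym hM hMint.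
have hb := good_BONG_lattice_norms G2sym hN hNint.
have hj2 : (2 <= j)%N by lia.
have hja : (j < size a)%N by lia.
have hjb : (j <= size b)%N by lia.
rewrite /dbr mul1r !xle_min (_ : (0 < j < size a)%N); last by lia.
rewrite (Acoef_le_qdef_prod ha hb) ?(Acoef_le_alpha_j ha hb) //=.
by case: ifP => [/andP[_ hjb1]|_]; [exact: Acoef_le_beta_j | exact: xle_inf].
Qed.
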